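(* Let $\mathcal{F}=\{f_i\}_{i=1}^N$ be a frame for $\mathbb{R}^n$ and $\Lambda\subseteq\{1,\dots,N\}$. If $\ker(\Theta_{L(\mathcal{F}_\Lambda)})\cap\mathcal{S}_2=\ker(\Theta_{L(\mathcal{F})})\cap\mathcal{S}_2$, then a subspace $M$ of $\mathbb{R}^n$ is an $\mathcal{F}$-PR subspace if and only if it is an $\mathcal{F}_\Lambda$-PR subspace. Consequently, $M$ is a maximal $\mathcal{F}$-PR subspace if and only if it is a maximal $\mathcal{F}_\Lambda$-PR subspace.
   Context: A frame for $\mathbb{R}^n$ is a finite spanning sequence; $\mathcal{F}_\Lambda=\{f_i\}_{i\in\Lambda}$. $\mathcal{S}_2$ is the set of real symmetric $n\times n$ matrices of rank at most $2$, and $\Theta_{L(\mathcal{F}_\Lambda)}(A)=(f_i^TAf_i)_{i\in\Lambda}$ for symmetric $A$. For a finite sequence $\mathcal{G}=\{g_i\}$ in $\mathbb{R}^n$, a subspace $M$ is a $\mathcal{G}$-PR subspace if $\{P_Mg_i\}$ (with $P_M$ the orthogonal projection onto $M$) spans $M$ and whenever $x,y\in M$ satisfy $|\langle x,P_Mg_i\rangle|=|\langle y,P_Mg_i\rangle|$ for all $i$, then $x=\pm y$. It is maximal if it is not a proper subspace of another $\mathcal{G}$-PR subspace. *)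

From HB Require Import structures.
From mathcomp Require Import all_boot all_order all_algebra.
From mathcomp Require Import reals.
Set Implicit Arguments. Unset Strict Implicit. Unset Printing Implicit Defensive.
Import Order.TTheory GRing.Theory Num.Theory.
Local Open Scope ring_scope.

(* Vectors of R^n are row vectors 'rV[R]_n; a subspace of R^n is the row space
   of a square matrix M : 'M[R]_n (mxalgebra, scope %MS). *)

Section Defs.
Variable R : realType.
Variable n : nat.

Definition dotv (u v : 'rV[R]_n) : R := (u *m v^T) 0 0.

(* orthogonal projection onto the row space of M (acting on row vectors x |-> x *m P) *)
Definition oproj (M : 'M[R]_n) : 'M[R]_n :=
  let B := row_base M in (B^T *m invmx (B *m B^T)) *m B.

Definition is_frame (I : finType) (g : I -> 'rV[R]_n) : Prop :=
  (\sum_(i : I) <<g i>> == 1%:M)%MS.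

Definition PR_subspace (I : finType) (g : I -> 'rV[R]_n) (M : 'M[R]_n) : Prop :=
  (\sum_(i : I) <<g i *m oproj M>> == M)%MS /\
  forall x y : 'rV[R]_n, (x <= M)%MS -> (y <= M)%MS ->
    (forall i : I, `|dotv x (g i *m oproj M)| = `|dotv y (g i *m oproj M)|) ->
    x = y \/ x = - y.

Definition maximal_PR_subspace (I : finType) (g : I -> 'rV[R]_n) (M : 'M[R]_n) : Prop :=
  PR_subspace g M /\
  forall M' : 'M[R]_n, PR_subspace g M' -> (M <= M')%MS -> (M' <= M)%MS.

Definition in_S2 (A : 'M[R]_n) : Prop := A^T = A /\ (\rank A <= 2)%N.

(* Theta_{L(G)}(A) = (g_i^T A g_i)_i ; kernel membership *)
Definition in_ker_Theta (I : finType) (g : I -> 'rV[R]_n) (A : 'M[R]_n) : Prop :=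
  forall i : I, (g i *m A *m (g i)^T) 0 0 = 0.

End Defs.

Definition subfam (R : realType) (n N : nat) (F : 'I_N -> 'rV[R]_n) (L : {set 'I_N})
  : {i : 'I_N | i \in L} -> 'rV[R]_n := fun i => F (sval i).
Arguments subfam {R n N} F L i.

From HB Require Import structures.
From mathcomp Require Import all_boot all_order all_algebra.
From mathcomp Require Import reals.
From mathcomp Require Import zify.
Set Implicit Arguments. Unset Strict Implicit. Unset Printing Implicit Defensive.
Import Order.TTheory GRing.Theory Num.Theory.
Local Open Scope ring_scope.

(* For x, y in R^n the matrix x^T x - y^T y is symmetric of rank at most 2,
   and its quadratic form at f is <x,f>^2 - <y,f>^2. So |<x,f_i>| = |<y,f_i>|
   for every vector f_i of a family exactly when x^T x - y^T y lies in the
   kernel of Theta for that family: on S_2 the kernel of Theta encodes which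
   pairs of vectors the family cannot tell apart. For x in M, moreover,
   <x, P_M f> = <x, f>, so phase retrievability on M only depends on this
   relation; the spanning condition comes for free, since a nonzero vector of
   M orthogonal to every P_M f_i would not be distinguished from 0. *)

Lemma mul_rV_tr_eq0 (R : realDomainType) (m : nat) (v : 'rV[R]_m) :
  v *m v^T = 0 -> v = 0.
Proof.
move=> /matrixP /(_ 0 0); rewrite !mxE => sum_sq0.
have {}sum_sq0 : \sum_j v 0 j ^+ 2 = 0.
  by rewrite -[RHS]sum_sq0; apply: eq_bigr => j _; rewrite !mxE expr2.
apply/rowP => j; rewrite mxE.
have /psumr_eq0P/(_ j isT)/eqP := sum_sq0.
by rewrite sqrf_eq0 => /(_ (fun j _ => sqr_ge0 (v 0 j)))/eqP.
Qed.

Lemma row_free_gram_unit (R : realFieldType) (m n : nat) (B : 'M[R]_(m, n)) :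
  row_free B -> B *m B^T \in unitmx.
Proof.
move=> freeB; rewrite -row_free_unit; apply: inj_row_free => v vBBt0.
have : (v *m B) *m (v *m B)^T = 0.
  by rewrite trmx_mul mulmxA -(mulmxA v) vBBt0 mul0mx.
by move/mul_rV_tr_eq0/eqP; rewrite mulmx_free_eq0 // => /eqP.
Qed.

Lemma ltn_rank_orthogonal (F : fieldType) (m1 m2 n : nat)
    (S : 'M[F]_(m1, n)) (M : 'M[F]_(m2, n)) :
  (\rank S < \rank M)%N ->
  exists2 x : 'rV[F]_n, (x <= M)%MS & (x != 0) && (x *m S^T == 0).
Proof.
move=> ltSM; set K := kermx S^T.
have rankK : \rank K = (n - \rank S)%N by rewrite mxrank_ker mxrank_tr.
have := mxrank_sum_cap M K; have := rank_leq_col (M + K)%MS.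
have := rank_leq_col S => rankS rankMK rank_sum_cap.
have : (M :&: K)%MS != 0 by rewrite -mxrank_eq0; lia.
case/rowV0Pn => x xMK nz_x; exists x; first exact: submx_trans xMK (capmxSl _ _).
by rewrite nz_x -sub_kermx (submx_trans xMK (capmxSr _ _)).
Qed.

Section Projection.
Variables (R : realType) (n : nat).
Implicit Types (M S : 'M[R]_n) (x y f : 'rV[R]_n).

Lemma dotvC x y : dotv x y = dotv y x.
Proof. by rewrite /dotv -[x *m y^T]trmxK trmx_mul trmxK mxE. Qed.

Lemma dot0v f : dotv 0 f = 0.
Proof. by rewrite /dotv mul0mx mxE. Qed.

Lemma dotv_orthogonal x S f : x *m S^T = 0 -> (f <= S)%MS -> dotv x f = 0.
Proof. by move=> xS0 /submxP[w ->]; rewrite /dotv trmx_mul mulmxA xS0 mul0mx mxE. Qed.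

Lemma oproj_id M x : (x <= M)%MS -> x *m oproj M = x.
Proof.
move=> xM; rewrite /oproj.
have : (x <= row_base M)%MS by rewrite eq_row_base.
have : row_base M *m (row_base M)^T \in unitmx.
  by apply: row_free_gram_unit; apply: row_base_free.
move: (row_base M) => B BBt_unit /submxP[w ->].
by rewrite !mulmxA -(mulmxA w B) mulmxK.
Qed.

Lemma trmx_oproj M : (oproj M)^T = oproj M.
Proof.
by rewrite /oproj; move: (row_base M) => B; rewrite !trmx_mul trmx_inv trmx_mul !trmxK mulmxA.
Qed.

Lemma oproj_sub M f : (f *m oproj M <= M)%MS.
Proof. by rewrite /oproj mulmxA (submx_trans (submxMl _ _)) ?eq_row_base. Qed.

Lemma dotv_oproj M x f : (x <= M)%MS -> dotv x (f *m oproj M) = dotv x f.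
Proof. by move=> xM; rewrite /dotv trmx_mul trmx_oproj mulmxA oproj_id. Qed.

Lemma quad_form_gram x f : (f *m (x^T *m x) *m f^T) 0 0 = dotv x f ^+ 2.
Proof.
rewrite mulmxA -(mulmxA (f *m x^T)) mxE big_ord1 expr2.
by congr (_ * _); rewrite -/(dotv f x) dotvC.
Qed.

Lemma quad_form_gram_diff x y f :
  (f *m (x^T *m x - y^T *m y) *m f^T) 0 0 = dotv x f ^+ 2 - dotv y f ^+ 2.
Proof. by rewrite mulmxBr mulmxBl mxE [X in _ + X]mxE !quad_form_gram. Qed.

Lemma in_S2_gram_diff x y : in_S2 (x^T *m x - y^T *m y).
Proof.
split; first by rewrite linearB /= !trmx_mul !trmxK.
apply: leq_trans (mxrank_add _ _) _; rewrite mxrank_opp.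
by apply: (@leq_add _ _ 1 1); apply: leq_trans (mxrankM_maxr _ _) (rank_leq_row _).
Qed.

Lemma in_ker_Theta_gram_diff (I : finType) (g : I -> 'rV[R]_n) x y :
  in_ker_Theta g (x^T *m x - y^T *m y) <->
  (forall i, `|dotv x (g i)| = `|dotv y (g i)|).
Proof.
have normE i : (`|dotv x (g i)| == `|dotv y (g i)|) =
               ((g i *m (x^T *m x - y^T *m y) *m (g i)^T) 0 0 == 0).
  rewrite quad_form_gram_diff subr_eq0 -(real_normK (num_real (dotv x (g i)))).
  by rewrite -(real_normK (num_real (dotv y (g i)))) eqrXn2.
by split=> H i; apply/eqP; [rewrite normE (H i) | rewrite -normE H].
Qed.

Definition phase_retrieves (I : finType) (g : I -> 'rV[R]_n) M : Prop :=
  forall x y, (x <= M)%MS -> (y <= M)%MS ->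
    (forall i, `|dotv x (g i)| = `|dotv y (g i)|) -> x = y \/ x = - y.

Lemma phase_retrieves_span (I : finType) (g : I -> 'rV[R]_n) M :
  phase_retrieves g M -> (\sum_i <<g i *m oproj M>> == M)%MS.
Proof.
move=> retrieves; set S := (\sum_i <<g i *m oproj M>>)%MS.
have SM : (S <= M)%MS by apply/sumsmx_subP => i _; rewrite genmxE oproj_sub.
rewrite -(mxrank_leqif_eq SM) eqn_leq mxrankS //= leqNgt.
apply/negP => /ltn_rank_orthogonal[x xM /andP[nz_x /eqP xS0]].
have gS i : (g i *m oproj M <= S)%MS by rewrite -genmxE (sumsmx_sup i).
have : x = 0 \/ x = - 0.
  apply: retrieves; rewrite ?sub0mx // => i.
  by rewrite dot0v -(dotv_oproj _ xM) (dotv_orthogonal xS0 (gS i)).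
by rewrite oppr0 => -[] x0; rewrite x0 eqxx in nz_x.
Qed.

Lemma PR_subspaceE (I : finType) (g : I -> 'rV[R]_n) M :
  PR_subspace g M <-> phase_retrieves g M.
Proof.
split=> [[_ retrieves] x y xM yM eq_xy | retrieves].
  by apply: retrieves => // i; rewrite !dotv_oproj.
split=> [|x y xM yM eq_xy]; first exact: phase_retrieves_span.
by apply: retrieves => // i; rewrite -(dotv_oproj (g i) xM) -(dotv_oproj (g i) yM).
Qed.

Lemma phase_retrieves_ker_S2 (I J : finType)
    (g : I -> 'rV[R]_n) (h : J -> 'rV[R]_n) M :
  (forall A, in_S2 A -> in_ker_Theta h A -> in_ker_Theta g A) ->
  phase_retrieves g M -> phase_retrieves h M.
Proof.
move=> ker_hg retrieves x y xM yM /in_ker_Theta_gram_diff ker_xy.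
apply: retrieves => //; apply/in_ker_Theta_gram_diff.
exact: ker_hg (in_S2_gram_diff x y) ker_xy.
Qed.

Lemma PR_subspace_eq_ker_S2 (I J : finType)
    (g : I -> 'rV[R]_n) (h : J -> 'rV[R]_n) M :
  (forall A, in_S2 A -> (in_ker_Theta g A <-> in_ker_Theta h A)) ->
  PR_subspace g M <-> PR_subspace h M.
Proof.
move=> ker_gh; rewrite !PR_subspaceE.
by split; apply: phase_retrieves_ker_S2 => A /ker_gh[].
Qed.

Lemma maximal_PR_subspace_eq (I J : finType)
    (g : I -> 'rV[R]_n) (h : J -> 'rV[R]_n) :
  (forall M, PR_subspace g M <-> PR_subspace h M) ->
  forall M, maximal_PR_subspace g M <-> maximal_PR_subspace h M.
Proof.
move=> PR_gh M; rewrite /maximal_PR_subspace PR_gh.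
by split=> -[PR_M maxM]; split=> // M' /PR_gh; apply: maxM.
Qed.

End Projection.

Theorem lemma3p5 (R : realType) (n N : nat) (F : 'I_N -> 'rV[R]_n)
  (L : {set 'I_N}) :
  is_frame F ->
  (forall A : 'M[R]_n,
     (in_ker_Theta (subfam F L) A /\ in_S2 A) <-> (in_ker_Theta F A /\ in_S2 A)) ->
  forall M : 'M[R]_n,
    (PR_subspace F M <-> PR_subspace (subfam F L) M) /\
    (maximal_PR_subspace F M <-> maximal_PR_subspace (subfam F L) M).
Proof.
move=> _ ker_LF.
have ker_FL A : in_S2 A -> (in_ker_Theta F A <-> in_ker_Theta (subfam F L) A).
  move=> S2A; split=> kerA.
  - by have [] := (ker_LF A).2 (conj kerA S2A).
  - by have [] := (ker_LF A).1 (conj kerA S2A).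
have PR_FL M := PR_subspace_eq_ker_S2 M ker_FL.
by move=> M; split; [exact: PR_FL | exact: maximal_PR_subspace_eq].
Qed.
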